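(* Let $n=p+q\ge 2$ and let $h^1,\dots,h^n:\mathbb{R}^{p,q}\to\mathcal{C}\ell(p,q)$ be a Clifford field vector. Then for every $x\in\mathbb{R}^{p,q}$ and every $\mu=1,\dots,n$, $h^\mu(x)\in\mathcal{C}\ell_{\circledS}(p,q)$, i.e. $\pi_0(h^\mu(x))=0$, and, if $n$ is odd, also $\pi_n(h^\mu(x))=0$.
   Context: $\eta=\mathrm{diag}(1,\dots,1,-1,\dots,-1)$ ($p$ ones, $q$ minus ones). $\mathcal{C}\ell(p,q)$ is the complex Clifford algebra with identity $e$ and generators $e^1,\dots,e^n$, $e^ae^b+e^be^a=2\eta^{ab}e$, with basis $e$ and $e^{a_1\dots a_k}=e^{a_1}\cdots e^{a_k}$ ($a_1<\dots<a_k$). $\pi_k$ denotes the projection onto the span $\mathcal{C}\ell_k(p,q)$ of the basis elements with $k$ indices. $\mathrm{Tr}(U)$ is the coefficient of $e$ in $U$. The center of $\mathcal{C}\ell(p,q)$ is $\mathcal{C}\ell_0(p,q)$ for even $n$ and $\mathcal{C}\ell_0(p,q)\oplus\mathcal{C}\ell_n(p,q)$ for odd $n$; $\mathcal{C}\ell_{\circledS}(p,q)$ denotes the set of elements with zero projection onto the center. A Clifford field vector is a collection of functions $h^\mu:\mathbb{R}^{p,q}\to\mathcal{C}\ell(p,q)$, $\mu=1,\dots,n$, such that for every $x$: $h^\mu h^\nu+h^\nu h^\mu=2\eta^{\mu\nu}e$ for all $\mu,\nu$, and $\mathrm{Tr}(h^1\cdots h^n)=0$. *)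

From mathcomp Require Import all_boot all_algebra.
From mathcomp Require Import reals complex.
Set Implicit Arguments. Unset Strict Implicit. Unset Printing Implicit Defensive.
Import GRing.Theory Num.Theory.
Local Open Scope ring_scope.

Section Clifford.
Variables (R : realType) (p q : nat).
Local Notation n := (p + q)%N.

(* Elements of Cl(p,q): complex coefficients on the basis e^A, A ⊆ {0,..,n-1}
   (index a = 0..n-1 corresponds to the paper's generator e^{a+1});
   the basis element e^A is e^{a_1}...e^{a_k} with a_1 < ... < a_k, e^∅ = e. *)
Definition Cl := {ffun {set 'I_n} -> R[i]}.

Definition eta_diag (a : 'I_n) : R[i] := if (a < p)%N then 1 else -1.
Definition eta (a b : 'I_n) : R[i] := if a == b then eta_diag a else 0.

Definition symdiff (A B : {set 'I_n}) : {set 'I_n} := (A :\: B) :|: (B :\: A).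

(* e^A e^B = cl_sign A B e^{A Δ B} *)
Definition cl_sign (A B : {set 'I_n}) : R[i] :=
  (-1) ^+ #|[set ab : 'I_n * 'I_n | [&& ab.1 \in A, ab.2 \in B & (ab.2 < ab.1)%N]]|
  * \prod_(a in A :&: B) eta_diag a.

Definition clbasis (A : {set 'I_n}) : Cl := [ffun B => (B == A)%:R].
Definition clone : Cl := clbasis set0.
Definition clgen (a : 'I_n) : Cl := clbasis [set a].

Definition clmul (U V : Cl) : Cl :=
  [ffun C => \sum_(A : {set 'I_n}) \sum_(B : {set 'I_n})
     (if symdiff A B == C then cl_sign A B * U A * V B else 0)].

Definition clproj (k : nat) (U : Cl) : Cl :=
  [ffun A : {set 'I_n} => if #|A| == k then U A else 0].

Definition clTr (U : Cl) : R[i] := U set0.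

(* Clifford field vector: h^mu : R^{p,q} -> Cl(p,q), mu = 1..n (here 0..n-1) *)
Definition clifford_field_vector (h : 'I_n -> 'rV[R]_n -> Cl) : Prop :=
  forall x : 'rV[R]_n,
    (forall mu nu : 'I_n,
        clmul (h mu x) (h nu x) + clmul (h nu x) (h mu x) = (2 * eta mu nu) *: clone)
    /\ clTr (\big[clmul/clone]_(mu < n) h mu x) = 0.

End Clifford.

From mathcomp Require Import all_boot all_algebra.
From mathcomp Require Import reals complex.
From mathcomp Require Import ring.
Set Implicit Arguments. Unset Strict Implicit. Unset Printing Implicit Defensive.
Import GRing.Theory Num.Theory.
Local Open Scope ring_scope.

(* Fix x and mu, and pick nu <> mu (possible as n >= 2); write a = h^mu,
   b = h^nu. Then b b = eta^{nu nu} e with eta^{nu nu} <> 0, and b a = - a b.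
   For z central, cyclicity of the trace gives
     eta Tr(a z) = Tr(a b b z) = Tr(b a b z) = - Tr(a b b z) = - eta Tr(a z),
   so Tr(a z) = 0. With z = e this is pi_0(a) = 0; for odd n the pseudoscalar
   e^{1...n} is central and Tr(a e^{1...n}) is a nonzero multiple of the top
   coefficient of a. *)

Section CliffordAlgebra.
Variables (R : realType) (p q : nat).
Local Notation n := (p + q)%N.
Local Notation S := {set 'I_n}.
Local Notation Cl := (Cl R p q).
Local Notation sgn := (cl_sign R).

Lemma in_symdiff (A B : S) x : (x \in symdiff A B) = (x \in A) (+) (x \in B).
Proof. by rewrite !inE; case: (x \in A); case: (x \in B). Qed.

Lemma symdiffK (A B : S) : symdiff A (symdiff A B) = B.
Proof. by apply/setP=> x; rewrite !in_symdiff addKb. Qed.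

Lemma symdiffC (A B : S) : symdiff A B = symdiff B A.
Proof. by apply/setP=> x; rewrite !in_symdiff addbC. Qed.

Lemma symdiffA (A B C : S) : symdiff A (symdiff B C) = symdiff (symdiff A B) C.
Proof. by apply/setP=> x; rewrite !in_symdiff addbA. Qed.

Lemma symdiff0 (A : S) : symdiff A set0 = A.
Proof. by apply/setP=> x; rewrite !in_symdiff inE addbF. Qed.

Lemma symdiffvv (A : S) : symdiff A A = set0.
Proof. by apply/setP=> x; rewrite !in_symdiff inE addbb. Qed.

Lemma clmulE (U V : Cl) C :
  clmul U V C = \sum_(A : S) sgn A (symdiff A C) * U A * V (symdiff A C).
Proof.
rewrite ffunE; apply: eq_bigr => A _.
rewrite (bigD1 (symdiff A C)) //= symdiffK eqxx big1 ?addr0 // => B neqB.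
by case: eqP => // defC; rewrite -defC symdiffK eqxx in neqB.
Qed.

Lemma card_signr (T : finType) (P : pred T) :
  (-1) ^+ #|[set x | P x]| = \prod_x (-1) ^+ P x :> R[i].
Proof.
rewrite -prodr_const big_mkcond /=; apply: eq_bigr => x _.
by rewrite inE; case: (P x).
Qed.

Lemma eta_diag_sqr (a : 'I_n) : eta_diag R a * eta_diag R a = 1.
Proof. by rewrite /eta_diag; case: ifP; rewrite ?mulr1 ?mulN1r ?opprK. Qed.

Lemma eta_diag_neq0 (a : 'I_n) : eta_diag R a != 0.
Proof. by rewrite /eta_diag; case: ifP; rewrite ?oppr_eq0 oner_eq0. Qed.

Lemma cl_signE (A B : S) :
  sgn A B = (\prod_(ab : 'I_n * 'I_n)
               (-1) ^+ [&& ab.1 \in A, ab.2 \in B & (ab.2 < ab.1)%N])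
            * \prod_a (if (a \in A) && (a \in B) then eta_diag R a else 1).
Proof.
rewrite /cl_sign card_signr; congr (_ * _).
by rewrite big_mkcond; apply: eq_bigr => a _; rewrite inE.
Qed.

Lemma cl_sign_cocycle (A B C : S) :
  sgn A B * sgn (symdiff A B) C = sgn A (symdiff B C) * sgn B C.
Proof.
rewrite !cl_signE mulrACA [RHS]mulrACA -!big_split /=; congr (_ * _).
  apply: eq_bigr => -[i j] _ /=; rewrite !in_symdiff.
  case: (j < i)%N; rewrite ?andbF ?mulr1 //.
  by case: (i \in A); case: (i \in B); case: (j \in B); case: (j \in C);
    rewrite /= ?expr0 ?expr1 ?mulr1 ?mul1r ?mulN1r ?opprK.
apply: eq_bigr => a _ /=; rewrite !in_symdiff.
by case: (a \in A); case: (a \in B); case: (a \in C);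
  rewrite /= ?mulr1 ?mul1r ?eta_diag_sqr.
Qed.

Lemma clmulA (U V W : Cl) : clmul (clmul U V) W = clmul U (clmul V W).
Proof.
apply/ffunP => D; rewrite !clmulE.
under eq_bigr do rewrite clmulE big_distrr big_distrl.
under [RHS]eq_bigr do rewrite clmulE mulr_sumr.
rewrite exchange_big /=; apply: eq_bigr => A _.
rewrite (reindex_inj (can_inj (symdiffK A))) /=; apply: eq_bigr => B _.
set E := symdiff B (symdiff A D).
have -> : symdiff (symdiff A B) D = E by rewrite /E symdiffA (symdiffC A).
have -> : symdiff A D = symdiff B E by rewrite /E symdiffK.
rewrite symdiffK.
transitivity (U A * V B * W E * (sgn A B * sgn (symdiff A B) E)); first by ring.
by rewrite cl_sign_cocycle; ring.
Qed.

Lemma cl_sign0l (B : S) : sgn set0 B = 1.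
Proof.
rewrite cl_signE !big1 ?mulr1 // => [a _ | ab _]; by rewrite inE.
Qed.

Lemma cl_sign0r (A : S) : sgn A set0 = 1.
Proof.
rewrite cl_signE !big1 ?mulr1 // => [a _ | ab _]; by rewrite inE andbF.
Qed.

Lemma cl_sign_neq0 (A B : S) : sgn A B != 0.
Proof.
rewrite /cl_sign mulf_eq0 signr_eq0 /= prodf_seq_neq0.
by apply/allP => a _; apply/implyP => _; apply: eta_diag_neq0.
Qed.

Lemma clbasisE (A B : S) : clbasis R A B = (B == A)%:R.
Proof. by rewrite ffunE. Qed.

Lemma clmul1l (U : Cl) : clmul (clone R p q) U = U.
Proof.
apply/ffunP => C; rewrite clmulE (bigD1 set0) //= big1 ?addr0.
  by rewrite clbasisE eqxx cl_sign0l mulr1 mul1r symdiffC symdiff0.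
by move=> A /negbTE nA; rewrite clbasisE nA mulr0 mul0r.
Qed.

Lemma clmul1r (U : Cl) : clmul U (clone R p q) = U.
Proof.
apply/ffunP => C; rewrite clmulE (bigD1 C) //= big1 ?addr0.
  by rewrite symdiffvv clbasisE eqxx cl_sign0r mulr1 mul1r.
move=> A nA; rewrite clbasisE; case: eqP => [AC0 | _]; last by rewrite mulr0.
by rewrite -(symdiffK A C) AC0 symdiff0 eqxx in nA.
Qed.

Lemma clmulNl (U V : Cl) : clmul (- U) V = - clmul U V.
Proof.
apply/ffunP => C; rewrite clmulE [RHS]ffunE clmulE -sumrN.
by apply: eq_bigr => A _; rewrite ffunE mulrN mulNr.
Qed.

Lemma clmulZl c (U V : Cl) : clmul (c *: U) V = c *: clmul U V.
Proof.
apply/ffunP => C; rewrite clmulE [RHS]ffunE clmulE scaler_sumr.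
by apply: eq_bigr => A _; rewrite ffunE /GRing.scale /=; ring.
Qed.

Lemma clmulZr c (U V : Cl) : clmul U (c *: V) = c *: clmul U V.
Proof.
apply/ffunP => C; rewrite clmulE [RHS]ffunE clmulE scaler_sumr.
by apply: eq_bigr => A _; rewrite ffunE /GRing.scale /=; ring.
Qed.

Lemma clTr_mul (U V : Cl) : clTr (clmul U V) = \sum_A sgn A A * U A * V A.
Proof. by rewrite /clTr clmulE; apply: eq_bigr => A _; rewrite symdiff0. Qed.

Lemma clTrC (U V : Cl) : clTr (clmul U V) = clTr (clmul V U).
Proof. by rewrite !clTr_mul; apply: eq_bigr => A _; ring. Qed.

Lemma clTrN (U : Cl) : clTr (- U) = - clTr U.
Proof. by rewrite /clTr ffunE. Qed.

Lemma clTrZ c (U : Cl) : clTr (c *: U) = c * clTr U.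
Proof. by rewrite /clTr ffunE. Qed.

Lemma clTr_mul_basis (U : Cl) (A : S) : clTr (clmul U (clbasis R A)) = sgn A A * U A.
Proof.
rewrite clTr_mul (bigD1 A) //= big1 ?addr0; first by rewrite clbasisE eqxx mulr1.
by move=> B /negbTE nB; rewrite clbasisE nB mulr0.
Qed.

(* The two products count the pairs j < i resp. i < j with j in B; together
   every j in B is paired with each of the n - 1 (an even number) other
   indices. *)
Lemma signr_pairs_odd (B : S) : odd n ->
  \prod_(ab : 'I_n * 'I_n) (-1) ^+ ((ab.2 \in B) && (ab.2 < ab.1)%N)
  = \prod_(ab : 'I_n * 'I_n) (-1) ^+ ((ab.1 \in B) && (ab.2 < ab.1)%N) :> R[i].
Proof.
move=> odd_n; set P := LHS.
rewrite (reindex_inj (h := fun ab : 'I_n * 'I_n => (ab.2, ab.1))) /=; last first.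
  by move=> [? ?] [? ?] [-> ->].
set Q := RHS.
suff PQ1 : P * Q = 1.
  by rewrite -[Q]mul1r -PQ1 -mulrA -big_split /= big1 ?mulr1 // => ab _; rewrite -expr2 sqrr_sign.
rewrite -big_split /= -(pair_big xpredT xpredT (fun i j : 'I_n =>
  (-1) ^+ ((j \in B) && (j < i)%N) * (-1) ^+ ((j \in B) && (i < j)%N))) /=.
rewrite exchange_big big1 // => j _.
case: (j \in B) => /=; last by rewrite big1 // => i _; rewrite mulr1.
transitivity (\prod_i (-1) ^+ (i != j) : R[i]).
  by apply: eq_bigr => i _; rewrite -val_eqE /= neq_ltn; case: ltngtP; rewrite /= ?mulr1 ?mul1r.
rewrite -card_signr (_ : [set i | i != j] = [set~ j]); last by apply/setP => i; rewrite !inE.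
by rewrite cardsC1 card_ord -signr_odd; case: n odd_n => //= m /negbTE ->.
Qed.

Lemma cl_sign_setTC (B : S) : odd n -> sgn setT B = sgn B setT.
Proof.
move=> odd_n; rewrite !cl_signE; congr (_ * _).
  rewrite (eq_bigr (fun ab : 'I_n * 'I_n => (-1) ^+ ((ab.2 \in B) && (ab.2 < ab.1)%N))); last first.
    by move=> ab _; rewrite inE.
  by rewrite signr_pairs_odd //; apply: eq_bigr => ab _; rewrite inE.
by apply: eq_bigr => a _; rewrite !inE andbC.
Qed.

Lemma clbasis_setT_central (U : Cl) : odd n ->
  clmul (clbasis R setT) U = clmul U (clbasis R setT).
Proof.
move=> odd_n; apply/ffunP => C; rewrite !clmulE.
rewrite (bigD1 setT) //= big1 ?addr0; last first.
  by move=> A /negbTE nA; rewrite clbasisE nA mulr0 mul0r.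
rewrite (bigD1 (symdiff setT C)) //= big1 ?addr0; last first.
  move=> A nA; rewrite clbasisE; case: eqP => [AC | _]; last by rewrite mulr0.
  by rewrite -AC -symdiffA symdiffvv symdiff0 eqxx in nA.
rewrite -symdiffA symdiffvv symdiff0 !clbasisE eqxx cl_sign_setTC //.
by rewrite !mulr1.
Qed.

Lemma clTr_anticomm_central (a b z : Cl) (c : R[i]) :
  c != 0 -> clmul b b = c *: clone R p q -> clmul b a = - clmul a b ->
  clmul z b = clmul b z -> clTr (clmul a z) = 0.
Proof.
move=> c_neq0 bb_c ba_anti zb_comm.
have abb_c : clmul (clmul a b) b = c *: a by rewrite clmulA bb_c clmulZr clmul1r.
set t := clTr (clmul (clmul (clmul a b) b) z).
have t_opp : - t = t.
  rewrite /t -clTrN -2!clmulNl -ba_anti !clmulA [LHS]clTrC.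
  by rewrite !clmulA zb_comm.
have : c * clTr (clmul a z) = 0 by rewrite -clTrZ -clmulZl -abb_c; apply/eqP; rewrite -eqNr t_opp.
by move/eqP; rewrite mulf_eq0 (negbTE c_neq0) => /eqP.
Qed.

Lemma clproj0_eq0 (U : Cl) : clTr U = 0 -> clproj 0 U = 0.
Proof.
by move=> trU0; apply/ffunP => A; rewrite !ffunE cards_eq0; case: eqP => // ->.
Qed.

Lemma clproj_setT_eq0 (U : Cl) : clTr (clmul U (clbasis R setT)) = 0 -> clproj n U = 0.
Proof.
rewrite clTr_mul_basis => /eqP; rewrite mulf_eq0 (negbTE (cl_sign_neq0 _ _)) => /= /eqP UT0.
apply/ffunP => A; rewrite !ffunE; case: eqP => // cardA.
suff -> : A = setT by [].
by apply/eqP; rewrite eqEcard subsetT cardsT card_ord cardA leqnn.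
Qed.

Section CliffordFieldVector.
Variable h : 'I_n -> 'rV[R]_n -> Cl.
Hypothesis h_cfv : clifford_field_vector h.

Lemma cfv_mulvv x nu : clmul (h nu x) (h nu x) = eta_diag R nu *: clone R p q.
Proof.
have [rel _] := h_cfv x; have := rel nu nu.
rewrite /eta eqxx -scalerA -mulr2n -scaler_nat; apply: scalerI.
by rewrite pnatr_eq0.
Qed.

Lemma cfv_anticomm x mu nu : nu != mu ->
  clmul (h nu x) (h mu x) = - clmul (h mu x) (h nu x).
Proof.
move=> nu_neq_mu; have [rel _] := h_cfv x; apply/eqP.
by rewrite -addr_eq0 rel /eta (negbTE nu_neq_mu) mulr0 scale0r.
Qed.

End CliffordFieldVector.
End CliffordAlgebra.

Lemma exists_ord_neq m (i : 'I_m) : (1 < m)%N -> exists j : 'I_m, j != i.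
Proof.
move=> m_gt1; have /card_gt0P[j] : (0 < #|[set~ i]|)%N.
  by rewrite cardsC1 card_ord -ltnS (ltn_predK m_gt1).
by rewrite !inE; exists j.
Qed.

Theorem theorem5 (R : realType) (p q : nat) (h : 'I_(p + q) -> 'rV[R]_(p + q) -> Cl R p q) :
  (2 <= p + q)%N ->
  clifford_field_vector h ->
  forall (x : 'rV[R]_(p + q)) (mu : 'I_(p + q)),
    clproj 0 (h mu x) = 0 /\ (odd (p + q) -> clproj (p + q) (h mu x) = 0).
Proof.
move=> n_ge2 h_cfv x mu; have [nu nu_neq_mu] := exists_ord_neq mu n_ge2.
have trace_central z : clmul z (h nu x) = clmul (h nu x) z -> clTr (clmul (h mu x) z) = 0.
  exact: clTr_anticomm_central (eta_diag_neq0 R nu) (cfv_mulvv h_cfv x nu)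
                               (cfv_anticomm h_cfv x nu_neq_mu).
split.
  by apply: clproj0_eq0; rewrite -[h mu x]clmul1r trace_central // clmul1l clmul1r.
by move=> odd_n; apply/clproj_setT_eq0/trace_central/clbasis_setT_central.
Qed.
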